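(* Let $G$ be a group, $F$ a field of characteristic $0$, and let $R=M_n(F)$ carry the elementary $G$-grading induced by an $n$-tuple $(g_1,\dots,g_n)$ of pairwise distinct elements of $G$. Let $m=x_1x_2\cdots x_k$ be a multilinear graded monomial with $\deg x_1\cdot\deg x_2\cdots\deg x_k=1_G$ which is a graded identity of $R$. Then $m'=x_2\cdots x_k$ is also a graded identity of $R$ (and hence $m$ lies in the $T_G$-ideal generated by $m'$).
   Context: The elementary $G$-grading on $M_n(F)$ induced by $(g_1,\dots,g_n)\in G^n$ is $R_g=\mathrm{span}\{e_{pq}: g_p^{-1}g_q=g\}$. Graded polynomials live in the free $G$-graded algebra on variables each having a prescribed degree in $G$; a graded polynomial $f(x_1,\dots,x_r)$ is a graded identity of $R$ if it vanishes under every substitution $x_i\mapsto a_i\in R_{\deg x_i}$. A $T_G$-ideal is an ideal of the free $G$-graded algebra invariant under all degree-preserving endomorphisms. *)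

From HB Require Import structures.
From mathcomp Require Import all_boot all_order all_algebra.
Set Implicit Arguments. Unset Strict Implicit. Unset Printing Implicit Defensive.
Import GRing.Theory.
Local Open Scope ring_scope.

Definition is_group (G : Type) (mul : G -> G -> G) (inv : G -> G) (one : G) :=
  [/\ forall a b c, mul a (mul b c) = mul (mul a b) c,
      forall a, mul one a = a,
      forall a, mul a one = a,
      forall a, mul (inv a) a = one
    & forall a, mul a (inv a) = one].

(* Homogeneous component R_d of the elementary grading on M_n(F) induced by
   (g_1,...,g_n) : R_d = span { e_pq : g_p^{-1} g_q = d }. A matrix lies in
   this span iff its entries outside those positions vanish. *)
Definition elem_homog (F : fieldType) (n : nat) (G : Type)
  (mul : G -> G -> G) (inv : G -> G) (g : 'I_n -> G) (d : G) (A : 'M[F]_n) :=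
  forall p q : 'I_n, A p q != 0 -> mul (inv (g p)) (g q) = d.

Definition mx_prod (F : fieldType) (n : nat) (As : seq 'M[F]_n) : 'M[F]_n :=
  foldr (fun A B => A *m B) 1%:M As.

Definition gprod (G : Type) (mul : G -> G -> G) (one : G) (ds : seq G) : G :=
  foldr mul one ds.

Fixpoint homog_subst (F : fieldType) (n : nat) (G : Type)
  (mul : G -> G -> G) (inv : G -> G) (g : 'I_n -> G)
  (ds : seq G) (As : seq 'M[F]_n) : Prop :=
  match ds, As with
  | [::], [::] => True
  | d :: ds', A :: As' => elem_homog mul inv g d A /\ homog_subst mul inv g ds' As'
  | _, _ => False
  end.

(* The multilinear graded monomial x_1 ... x_k whose variables x_i are
   pairwise distinct and have degrees ds = [:: deg x_1; ...; deg x_k] is a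
   graded identity of M_n(F) (elementary grading by g): every substitution
   x_i |-> a_i in R_{deg x_i} gives a_1 ... a_k = 0. *)
Definition monomial_graded_identity (F : fieldType) (n : nat) (G : Type)
  (mul : G -> G -> G) (inv : G -> G) (g : 'I_n -> G) (ds : seq G) :=
  forall As : seq 'M[F]_n, homog_subst mul inv g ds As -> mx_prod As = 0.

From HB Require Import structures.
From mathcomp Require Import all_boot all_order all_algebra.
Import GRing.Theory.
Local Open Scope ring_scope.

(* Proof idea: degrees multiply along nonzero entries of products, so if
   a_2 ... a_k has a nonzero entry at (p, q), its degree is g_p^-1 g_q and the
   hypothesis on the total degree forces deg x_1 = g_q^-1 g_p.  Substituting the
   matrix unit e_qp for x_1 then gives e_qp a_2 ... a_k, whose (q, q) entry is
   that nonzero entry, contradicting that x_1 ... x_k is an identity. *)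

Lemma mulmx_neq0_entry (F : fieldType) n (A B : 'M[F]_n) p q :
  (A *m B) p q != 0 -> exists2 r, A p r != 0 & B r q != 0.
Proof.
rewrite mxE => ABpq; apply/exists_inP; apply: contraNT ABpq => /exists_inPn AB0.
apply/eqP/big1 => r _; case: (eqVneq (A p r) 0) => [->|Apr]; first by rewrite mul0r.
by move/negPn/eqP: (AB0 r Apr) => ->; rewrite mulr0.
Qed.

Lemma mul_delta_mx_entry (F : fieldType) n (A : 'M[F]_n) p q :
  (delta_mx q p *m A) q q = A p q.
Proof.
rewrite mxE (bigD1 p) //= !mxE !eqxx mul1r big1 ?addr0 // => r /negbTE rp.
by rewrite !mxE rp andbF mul0r.
Qed.

Section ElementaryGrading.

Set Implicit Arguments.
Unset Strict Implicit.

Variables (G : Type) (mul : G -> G -> G) (inv : G -> G) (one : G).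
Hypothesis HG : is_group mul inv one.
Variables (F : fieldType) (n : nat) (g : 'I_n -> G).

Local Notation homog := (@elem_homog F n G mul inv g).

Lemma mul_eq1_quotient (d x y : G) :
  mul d (mul (inv x) y) = one -> d = mul (inv y) x.
Proof.
case: HG => mulA mul1g mulg1 mulVg mulgV dxy1.
have inv_quot : mul (mul (inv x) y) (mul (inv y) x) = one.
  by rewrite -mulA (mulA y) mulgV mul1g mulVg.
by rewrite -[d]mulg1 -inv_quot mulA dxy1 mul1g.
Qed.

Lemma elem_homog1 : homog one 1%:M.
Proof.
case: HG => _ _ _ mulVg _ p q; rewrite mxE.
by case: (eqVneq p q) => [->|]; rewrite ?mulVg ?eqxx.
Qed.

Lemma elem_homogM d e A B :
  homog d A -> homog e B -> homog (mul d e) (A *m B).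
Proof.
case: HG => mulA mul1g _ _ mulgV hA hB p q /mulmx_neq0_entry[r /hA <- /hB <-].
by rewrite -mulA (mulA (g r)) mulgV mul1g.
Qed.

Lemma elem_homog_mx_prod ds As :
  homog_subst mul inv g ds As -> homog (gprod mul one ds) (mx_prod As).
Proof.
elim: ds As => [|d ds IH] [|A As] //= => [_|[hA hAs]].
  exact: elem_homog1.
exact: elem_homogM hA (IH _ hAs).
Qed.

Lemma elem_homog_delta i j : homog (mul (inv (g i)) (g j)) (delta_mx i j).
Proof.
move=> p q; rewrite mxE.
by case: (eqVneq p i) => [->|]; case: (eqVneq q j) => [->|]; rewrite ?andbF ?eqxx.
Qed.

End ElementaryGrading.

Theorem mainTheorem3
  (G : Type) (mul : G -> G -> G) (inv : G -> G) (one : G)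
  (HG : is_group mul inv one)
  (F : fieldType) (hchar : [pchar F] =i pred0)
  (n : nat) (g : 'I_n -> G) (g_inj : injective g)
  (d1 : G) (ds : seq G)
  (hdeg : gprod mul one (d1 :: ds) = one)
  (hid : @monomial_graded_identity F n G mul inv g (d1 :: ds)) :
  @monomial_graded_identity F n G mul inv g ds.
Proof.
move=> As hAs; apply/eqP/matrix0Pn => -[p [q Apq]].
have deg_pq := elem_homog_mx_prod HG hAs Apq.
have deg_d1 : d1 = mul (inv (g q)) (g p).
  by apply: (mul_eq1_quotient HG); rewrite deg_pq.
have hsubst : homog_subst mul inv g (d1 :: ds) (delta_mx q p :: As).
  by split; rewrite // deg_d1; apply: elem_homog_delta.
move/matrixP/(_ q q): (hid _ hsubst); rewrite /= mul_delta_mx_entry mxE.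
by move/eqP; rewrite (negbTE Apq).
Qed.
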